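(* Let $G$ be a finite group and let $M,N$ be normal subgroups of $G$ with $1\neq M<N$. The following are equivalent: (1) every $g\in G\setminus N$ is conjugate in $G$ to every element of $gM$; (2) $|C_G(g)|=|C_{G/M}(Mg)|$ for every $g\in G\setminus N$; (3) for every $g\in G\setminus N$ we have $\chi(g)=0$ for all $\chi\in\mathrm{Irr}(G\mid M)$; (4) $V(G\mid M)\le N$; (5) for all $g\in G\setminus N$ and all $z\in M$ there exists $y\in G$ with $[g,y]=z$.
   Context: $\mathrm{Irr}(G)$ denotes the set of complex irreducible characters of $G$, and $\mathrm{Irr}(G\mid M)=\{\chi\in\mathrm{Irr}(G)\mid M\not\le\ker\chi\}$. The vanishing-off subgroup $V(G\mid M)$ is the subgroup of $G$ generated by all elements $g\in G$ such that $\chi(g)\neq 0$ for some $\chi\in\mathrm{Irr}(G\mid M)$. The commutator is $[g,y]=g^{-1}y^{-1}gy$. *)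

From mathcomp Require Import all_boot all_order all_algebra all_fingroup all_solvable all_field all_character.
Set Implicit Arguments. Unset Strict Implicit. Unset Printing Implicit Defensive.
Import GRing.Theory Num.Theory.
Local Open Scope group_scope.

Definition in_Irr_rel (gT : finGroupType) (G M : {group gT}) (i : Iirr G) : bool :=
  ~~ (M \subset cfker ('chi[G]_i)%R).

Definition vanishing_off (gT : finGroupType) (G M : {group gT}) : {set gT} :=
  <<[set g in G | [exists i : Iirr G, in_Irr_rel M i && (('chi[G]_i)%R g != 0)%R]]>>.

From mathcomp Require Import all_boot all_order all_algebra all_fingroup all_solvable all_field all_character.
Set Implicit Arguments. Unset Strict Implicit. Unset Printing Implicit Defensive.
Import GRing.Theory Num.Theory.
Local Open Scope group_scope.

(* For x in G the preimage D of C_{G/M}(Mx) is the set of y in G with x^y in xM,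
   so x^D = x^G :&: xM and |C_G(x)| |x^D| = |M| |C_{G/M}(Mx)|; hence
   |C_G(x)| = |C_{G/M}(Mx)| iff xM is contained in x^G.  The second orthogonality
   relation gives |C_G(x)| = |C_{G/M}(Mx)| + sum_{chi in Irr(G|M)} |chi(x)|^2, so
   the same equality holds iff every chi in Irr(G|M) vanishes at x.  Condition (5)
   is (1) read through x [x, y] = x^y, and (4) is (3) by definition of V(G|M). *)

Lemma lcoset_subP (gT : finGroupType) (A B : {set gT}) x :
  reflect (forall a, a \in A -> x * a \in B) (x *: A \subset B).
Proof.
apply: (iffP subsetP) => [xAB a Aa | xAB _ /lcosetP[a Aa ->]]; last exact: xAB.
by apply: xAB; rewrite mem_lcoset mulKg.
Qed.

Lemma commg_classP (gT : finGroupType) (G : {group gT}) x z :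
  reflect (exists2 y, y \in G & [~ x, y] = z) (x * z \in x ^: G).
Proof.
apply: (iffP imsetP) => [[y Gy xzE] | [y Gy <-]]; exists y => //.
  by rewrite /commg -xzE mulKg.
by rewrite /commg mulKVg.
Qed.

Section CosetCentraliser.
Variables (gT : finGroupType) (G H : {group gT}) (x : gT).
Hypotheses (nsHG : H <| G) (Gx : x \in G).

Local Notation D := (coset H @*^-1 'C_(G / H)[coset H x]).

Lemma mem_cosetpre_subcent1 y :
  y \in G -> (y \in D) = (x ^ y \in x *: H).
Proof.
move=> Gy; have nHG := normal_norm nsHG.
have [nHx nHy] := (subsetP nHG x Gx, subsetP nHG y Gy).
rewrite -norm_rlcoset // inE nHy /= inE in_setI mem_quotient //= cent1C.
apply/cent1P/rcoset_kercosetP; rewrite ?groupJ // morphJ //=.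
  by move/commgP/conjg_fixP.
by move/conjg_fixP/commgP.
Qed.

Lemma cosetpre_subcent1_sub : D \subset G.
Proof. by rewrite sub_cosetpre_quo ?subsetIl. Qed.

Lemma subcent1_sub_cosetpre : 'C_G[x] \subset D.
Proof.
apply/subsetP=> y /setIP[Gy /cent1P cxy].
by rewrite mem_cosetpre_subcent1 // /conjg -cxy mulKg lcoset_refl.
Qed.

Lemma class_cosetpre_subcent1 : x ^: D = x ^: G :&: x *: H.
Proof.
apply/setP=> z; rewrite inE; apply/imsetP/andP=> [[y Dy ->] | [/imsetP[y Gy ->]]].
  have Gy := subsetP cosetpre_subcent1_sub y Dy.
  by split; [exact: memJ_class | rewrite -(mem_cosetpre_subcent1 Gy)].
by rewrite -mem_cosetpre_subcent1 // => Dy; exists y.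
Qed.

Lemma card_cent1_class_cosetpre :
  (#|'C_G[x]| * #|x ^: D|)%N = (#|H| * #|'C_(G / H)[coset H x]|)%N.
Proof.
have ->: 'C_G[x] = 'C_D[x].
  apply/eqP; rewrite eqEsubset (setSI _ cosetpre_subcent1_sub) andbT.
  by rewrite subsetI subsetIr andbT; apply: subcent1_sub_cosetpre.
by rewrite -index_cent1 Lagrange ?subsetIl // card_cosetpre.
Qed.

Lemma card_subcent1_coset_classP :
  #|'C_G[x]| = #|'C_(G / H)[coset H x]| <-> x *: H \subset x ^: G.
Proof.
have sxDxH : x ^: D \subset x *: H by rewrite class_cosetpre_subcent1 subsetIr.
have xH_xD : (x *: H \subset x ^: D) = (x *: H \subset x ^: G).
  by rewrite class_cosetpre_subcent1 subsetI subxx andbT.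
rewrite -xH_xD -(subset_leqif_card sxDxH).2 card_lcoset.
move: card_cent1_class_cosetpre; rewrite mulnC => E.
split=> [cE | /eqP xD_H].
  by rewrite -(eqn_pmul2r (cardG_gt0 'C_G[x])) E cE.
by apply/eqP; rewrite -(eqn_pmul2l (cardG_gt0 H)) -E xD_H.
Qed.
End CosetCentraliser.

Section IrrQuotient.
Variables (gT : finGroupType) (G H : {group gT}) (x : gT).
Hypotheses (nsHG : H <| G) (Gx : x \in G).

Lemma card_subcent1_coset_irr :
  (#|'C_G[x]|%:R = #|'C_(G / H)[coset H x]|%:R
     + \sum_(i | in_Irr_rel H i) `|'chi[G]_i x| ^+ 2 :> algC)%R.
Proof.
have Gx_quo : coset H x \in G / H by apply: mem_quotient.
have := second_orthogonality_relation x Gx.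
rewrite mulrb class_refl => E; rewrite -{}E.
have := second_orthogonality_relation (coset H x) Gx_quo.
rewrite mulrb class_refl => E; rewrite -{}E.
rewrite -2!(eq_bigr _ (fun _ _ => normCK _)) sum_norm_irr_quo //.
by rewrite (bigID (fun i => H \subset cfker 'chi[G]_i)%R).
Qed.

Lemma card_subcent1_coset_irrP :
  #|'C_G[x]| = #|'C_(G / H)[coset H x]| <->
  (forall i : Iirr G, in_Irr_rel H i -> 'chi[G]_i x = 0)%R.
Proof.
split=> [cE i Hi | chi0]; last first.
  apply/eqP; rewrite -(eqr_nat algC) card_subcent1_coset_irr big1 ?addr0 // => i Hi.
  by rewrite chi0 // normr0 expr0n.
have norm2_ge0 j : (0 <= `|'chi[G]_j x| ^+ 2 :> algC)%R by rewrite exprn_ge0.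
have sum0 : (\sum_(j | in_Irr_rel H j) `|'chi[G]_j x| ^+ 2 = 0 :> algC)%R.
  apply: (@addrI _ #|'C_(G / H)[coset H x]|%:R%R).
  by rewrite addr0 -card_subcent1_coset_irr cE.
move/eqP: (psumr_eq0P (fun j _ => norm2_ge0 j) sum0 Hi).
by rewrite expf_eq0 normr_eq0 => /andP[_ /eqP].
Qed.
End IrrQuotient.

Lemma vanishing_off_subP (gT : finGroupType) (G M N : {group gT}) :
  vanishing_off G M \subset N <->
  (forall g, g \in G :\: N -> forall i : Iirr G, in_Irr_rel M i -> 'chi[G]_i g = 0)%R.
Proof.
rewrite gen_subG; split=> [/subsetP VN g /setDP[Gg notNg] i Mi | chi0].
  apply/eqP; apply: contraNT notNg => chi_g; apply: VN.
  by rewrite inE Gg; apply/existsP; exists i; rewrite Mi.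
apply/subsetP=> g; rewrite inE => /andP[Gg /existsP[i /andP[Mi]]].
by apply: contraNT => notNg; rewrite chi0 ?inE ?notNg.
Qed.

Theorem mainTheorem6 (gT : finGroupType) (G M N : {group gT})
  (nMG : M <| G) (nNG : N <| G) (ntM : M :!=: 1) (ltMN : M \proper N) :
  [<->
    (forall g, g \in G :\: N -> forall m, m \in M -> g * m \in g ^: G);
    (forall g, g \in G :\: N -> #|'C_G[g]| = #|'C_(G / M)[coset M g]|);
    (forall g, g \in G :\: N -> forall i : Iirr G, in_Irr_rel M i -> ('chi[G]_i)%R g = 0%R);
    (vanishing_off G M \subset N);
    (forall g, g \in G :\: N -> forall z, z \in M -> exists2 y, y \in G & [~ g, y] = z)].
Proof.
have cent1_lcosetP g : g \in G :\: N ->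
    #|'C_G[g]| = #|'C_(G / M)[coset M g]| <-> (forall m, m \in M -> g * m \in g ^: G).
  case/setDP=> Gg _; apply: iff_trans (card_subcent1_coset_classP nMG Gg) _.
  by split=> /lcoset_subP.
have cent1_irrP g : g \in G :\: N ->
    #|'C_G[g]| = #|'C_(G / M)[coset M g]| <->
    (forall i : Iirr G, in_Irr_rel M i -> 'chi[G]_i g = 0)%R.
  by case/setDP=> Gg _; apply: card_subcent1_coset_irrP.
tfae.
- by move=> xM_xG g GNg; apply/(cent1_lcosetP g GNg)/xM_xG.
- by move=> cent g GNg; apply/(cent1_irrP g GNg)/cent.
- exact: (vanishing_off_subP G M N).2.
- move/vanishing_off_subP=> chi0 g GNg z Mz; apply/commg_classP; move: z Mz.
  by apply/(cent1_lcosetP g GNg)/(cent1_irrP g GNg)/chi0.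
- by move=> comm g GNg m Mm; apply/commg_classP/comm.
Qed.
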